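(* Let $X$ be a space possessing a binary normal closed subbase $\mathcal S$. Then every $\mathcal S$-convex $\mathcal S$-open continuous surjection $f\colon X\to Y$ is invertible: for every space $Z$ and every continuous map $g\colon Z\to Y$ there exists a continuous map $h\colon Z\to X$ with $f\circ h=g$.
   Context: All spaces are Tychonoff and maps continuous. A family $\mathcal S$ of closed subsets of $X$ is a closed subbase if every closed set is an intersection of finite unions of members of $\mathcal S$. A family is linked if any two members intersect; $\mathcal S$ is binary if every linked subfamily has nonempty intersection. $\mathcal S$ is normal if for every disjoint $S_0,S_1\in\mathcal S$ there exist $T_0,T_1\in\mathcal S$ with $S_0\cap T_1=\varnothing=T_0\cap S_1$ and $T_0\cup T_1=X$. For $B\subset X$, $I_{\mathcal S}(B)=\bigcap\{S\in\mathcal S:B\subset S\}$; $B$ is $\mathcal S$-convex if $I_{\mathcal S}(\{x,y\})\subset B$ for all $x,y\in B$. A map $f\colon X\to Y$ is $\mathcal S$-convex if all its fibers $f^{-1}(y)$ are $\mathcal S$-convex, and $\mathcal S$-open if $f(X\setminus S)$ is open in $Y$ for every $S\in\mathcal S$. *)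

From mathcomp Require Import all_boot all_order all_algebra.
From mathcomp Require Import all_classical all_reals all_analysis.
From mathcomp Require Import Rstruct Rstruct_topology.
Set Implicit Arguments. Unset Strict Implicit. Unset Printing Implicit Defensive.
Local Open Scope classical_set_scope.

Definition tychonoff_space (T : topologicalType) : Prop :=
  accessible_space T /\
  forall (x : T) (B : set T), closed B -> ~ B x ->
    exists f : T -> Rdefinitions.R,
      continuous f /\ f x = 0%R /\ (forall y, B y -> f y = 1%R).

Definition closed_subbase (T : topologicalType) (S : set (set T)) : Prop :=
  (forall A, S A -> closed A) /\
  forall C : set T, closed C ->
    exists F : set (set T),
      (forall B, F B -> exists s : seq (set T),
           (forall A, A \in s -> S A) /\ B = \big[setU/set0]_(A <- s) A) /\
      C = \bigcap_(B in F) B.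

Definition linked_family (T : Type) (L : set (set T)) : Prop :=
  forall A B, L A -> L B -> A `&` B !=set0.

Definition binary_subbase (T : Type) (S : set (set T)) : Prop :=
  forall L, L `<=` S -> linked_family L -> \bigcap_(A in L) A !=set0.

Definition normal_family (T : Type) (S : set (set T)) : Prop :=
  forall S0 S1, S S0 -> S S1 -> S0 `&` S1 = set0 ->
    exists T0 T1, S T0 /\ S T1 /\ S0 `&` T1 = set0 /\ T0 `&` S1 = set0 /\
      T0 `|` T1 = setT.

Definition S_hull (T : Type) (S : set (set T)) (B : set T) : set T :=
  \bigcap_(A in [set A | S A /\ B `<=` A]) A.

Definition S_convex (T : Type) (S : set (set T)) (B : set T) : Prop :=
  forall x y, B x -> B y -> S_hull S [set x; y] `<=` B.

Definition S_convex_map (T U : Type) (S : set (set T)) (f : T -> U) : Prop :=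
  forall y : U, S_convex S (f @^-1` [set y]).

Definition S_open_map (T : Type) (U : topologicalType) (S : set (set T))
    (f : T -> U) : Prop :=
  forall A, S A -> open (f @` (~` A)).

Definition invertible_map (X Y : topologicalType) (f : X -> Y) : Prop :=
  forall (Z : topologicalType), tychonoff_space Z ->
    forall g : Z -> Y, continuous g ->
      exists h : Z -> X, continuous h /\ f \o h = g.

From mathcomp Require Import all_boot all_order all_algebra.
From mathcomp Require Import all_classical all_reals all_analysis.
From mathcomp Require Import Rstruct Rstruct_topology lra.
Local Open Scope classical_set_scope.

Set Implicit Arguments. Unset Strict Implicit. Unset Printing Implicit Defensive.

(* A binary closed subbase makes X compact, by an Alexander-type argument on
   ultrafilters.  Given a point x0 and a nonempty closed S-convex set F, the
   members of S that contain x0 and meet F, together with F itself, have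
   exactly one common point, the gate of x0 in F: binarity gives existence
   and normality gives uniqueness.  Taking the gate of a fixed x0 in every
   fibre of f yields a section s of f.  S-openness of f shows that s y is the
   only cluster point of s at y, so by compactness s is continuous, and
   h := s \o g lifts g. *)

Lemma setI_eq0_contra (T : Type) (A B : set T) x :
  A `&` B = set0 -> A x -> B x -> False.
Proof. by move=> AB Ax Bx; have : (A `&` B) x by []; rewrite AB. Qed.

Lemma setU_eqT_cases (T : Type) (A B : set T) x :
  A `|` B = setT -> A x \/ B x.
Proof. by move=> AB; have : (A `|` B) x by rewrite AB. Qed.

Lemma tychonoff_hausdorff (T : topologicalType) :
  tychonoff_space T -> hausdorff_space T.
Proof.
move=> [T1 creg] p q clpq; have [//|pq] := pselect (p = q); exfalso.
have [f [cf [fp fq]]] := creg p [set q] (@accessible_closed_set1 _ T1 q) pq.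
have half_gt0 : (0 < (1/2 : Rdefinitions.R))%R by lra.
have [t [/= pt qt]] := clpq _ _ (cf p _ (nbhsx_ballx (f p) _ half_gt0))
                              (cf q _ (nbhsx_ballx (f q) _ half_gt0)).
move: pt qt; rewrite /ball /= fp (fq q erefl).
move=> /Num.Theory.ltr_normlP [lt1 _] /Num.Theory.ltr_normlP [_ lt2].
by move: lt1 lt2; generalize (f t) => r; lra.
Qed.

Section BinaryNormalSubbase.
Variables (X : topologicalType) (S : set (set X)).
Hypotheses (X_T1 : accessible_space X) (S_subbase : closed_subbase S)
  (S_binary : binary_subbase S) (S_normal : normal_family S).

Local Notation UU s := (\big[setU/set0]_(A <- s) A).

Lemma bigsetU_seqP (s : seq (set X)) x : UU s x <-> exists2 A, A \in s & A x.
Proof.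
elim: s => [|A s IH]; first by rewrite big_nil; split => // -[].
rewrite big_cons; split.
  case=> [Ax|/IH [B Bs Bx]]; first by exists A => //; rewrite inE eqxx.
  by exists B => //; rewrite inE Bs orbT.
case=> B; rewrite inE => /orP [/eqP -> Ax|Bs Bx]; first by left.
by right; apply/IH; exists B.
Qed.

Lemma subbase_cover_avoiding C p : closed C -> ~ C p ->
  exists s : seq (set X), (forall A, A \in s -> S A) /\ C `<=` UU s /\ ~ UU s p.
Proof.
move=> cC nCp; have [F [HF CE]] := S_subbase.2 C cC.
have [B FB nBp] : exists2 B, F B & ~ B p.
  apply: contra_notP nCp => H; rewrite CE => B FB.
  by apply: contra_notP (H) => nBp; exists B.
have [s [sS BE]] := HF B FB.
by exists s; rewrite -BE; split => //; split => //; rewrite CE => x; apply.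
Qed.

Lemma subbase_separates_points p q : p <> q -> exists A, S A /\ A p /\ ~ A q.
Proof.
move=> pq; have [s [sS [ps nqs]]] := subbase_cover_avoiding
  (@accessible_closed_set1 _ X_T1 p) (fun qp : q = p => pq (esym qp)).
have /bigsetU_seqP [A As Ap] := ps p erefl.
exists A; split; first exact: sS.
by split => // Aq; apply: nqs; apply/bigsetU_seqP; exists A.
Qed.

Definition subbase_covers p := exists T, S T /\ T p.

Lemma subbase_covers_distinct p q : p <> q -> subbase_covers p.
Proof. by move=> /subbase_separates_points [A [SA [Ap _]]]; exists A. Qed.

(* If every member through p met W, these members together with W would be
   linked; a common point q would lie in W, hence q <> p, and a member
   separating p from q contradicts binarity. *)
Lemma subbase_disjoint_member p W : S W -> ~ W p -> subbase_covers p ->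
  exists T, S T /\ T p /\ T `&` W = set0.
Proof.
move=> SW nWp [T0 [ST0 T0p]].
have [->|/set0P [w Ww]] := eqVneq W set0; first by exists T0; rewrite setI0.
apply: contra_notP nWp => noT.
have meetW T : S T -> T p -> T `&` W !=set0.
  by move=> ST Tp; apply/set0P/eqP => TW; apply: noT; exists T.
pose L := [set A | A = W \/ (S A /\ A p)].
have LS : L `<=` S by move=> A [->|[]].
have linL : linked_family L.
  move=> A B [->|[SA Ap]] [->|[SB Bp]].
  - by exists w.
  - by rewrite setIC; apply: meetW.
  - exact: meetW.
  - by exists p.
have [q Lq] := S_binary LS linL.
have [->|pq] := pselect (p = q); first by apply: Lq; left.
have [A [SA [Ap nAq]]] := subbase_separates_points pq.
by exfalso; apply: nAq; apply: Lq; right.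
Qed.

Definition separated p V := S V /\ exists T, S T /\ T p /\ T `&` V = set0.

Lemma separated_cover p V : separated p V -> exists U V', S U /\ U p /\
  U `&` V = set0 /\ V `<=` V' /\ U `|` V' = setT /\ separated p V'.
Proof.
move=> [SV [T [ST [Tp TV]]]].
have [T0 [T1 [ST0 [ST1 [TT1 [T0V T01]]]]]] := S_normal ST SV TV.
have nT1p : ~ T1 p by apply: setI_eq0_contra TT1 Tp.
have T0p : T0 p by case: (setU_eqT_cases p T01) => // /nT1p.
exists T0, T1; do 4!split => //.
  move=> x Vx; case: (setU_eqT_cases x T01) => // T0x.
  by case: (setI_eq0_contra T0V T0x Vx).
by split => //; split => //; exists T.
Qed.

Lemma S_convexI F U : S_convex S F -> S U -> S_convex S (F `&` U).
Proof.
move=> cF SU x y [Fx Ux] [Fy Uy] z Hz; split; first exact: (cF x y).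
by apply: Hz; split => // w [->|->].
Qed.

(* Two points a, c of F outside the enlarged members W1, W2 would make
   U1, U2 and all members through a and c a linked family; its common point
   lies in the hull of {a, c}, hence in F, but in neither V1 nor V2. *)
Lemma S_convex_separated2 p F V1 V2 : S_convex S F ->
  separated p V1 -> separated p V2 -> F `<=` V1 `|` V2 ->
  exists V, separated p V /\ F `<=` V.
Proof.
move=> cF /separated_cover [U1 [W1 [SU1 [U1p [U1V1 [V1W1 [UW1 pW1]]]]]]].
move=> /separated_cover [U2 [W2 [SU2 [U2p [U2V2 [V2W2 [UW2 pW2]]]]]]] FV.
have [FW1|/nonsubset [a [Fa nW1a]]] := pselect (F `<=` W1); first by exists W1.
have [FW2|/nonsubset [c [Fc nW2c]]] := pselect (F `<=` W2); first by exists W2.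
exfalso.
have U1a : U1 a by case: (setU_eqT_cases a UW1).
have U2c : U2 c by case: (setU_eqT_cases c UW2).
pose L := [set A | A = U1 \/ A = U2 \/ (S A /\ A a /\ A c)].
have LS : L `<=` S by move=> A [->|[->|[]]].
have linL : linked_family L.
  move=> A B [->|[->|[_ [Aa Ac]]]] [->|[->|[_ [Ba Bc]]]];
    solve [by exists p | by exists a | by exists c].
have [q Lq] := S_binary LS linL.
have Fq : F q.
  apply: (cF a c Fa Fc) => A [SA aA]; apply: Lq; right; right.
  by split => //; split; apply: aA; [left|right].
case: (FV q Fq) => Vq.
  by apply: setI_eq0_contra U1V1 _ Vq; apply: Lq; left.
by apply: setI_eq0_contra U2V2 _ Vq; apply: Lq; right; left.
Qed.

Lemma S_convex_separated p (s : seq (set X)) F : S_convex S F ->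
  (forall A, A \in s -> S A /\ ~ A p) -> subbase_covers p ->
  F `<=` UU s -> F = set0 \/ exists V, separated p V /\ F `<=` V.
Proof.
elim: s F => [|W s IH] F cF sS covp FU.
  by left; apply/seteqP; split => // x /FU; rewrite big_nil.
have [SW nWp] : S W /\ ~ W p by apply: sS; rewrite inE eqxx.
have [U [V' [SU [Up [UW [WV' [UV' pV']]]]]]] :=
  separated_cover (conj SW (subbase_disjoint_member SW nWp covp)).
have FUs : F `&` U `<=` UU s.
  move=> x [Fx Ux]; move: (FU x Fx); rewrite big_cons; case=> // Wx.
  by case: (setI_eq0_contra UW Ux Wx).
have sS' A : A \in s -> S A /\ ~ A p.
  by move=> As; apply: sS; rewrite inE As orbT.
right; case: (IH _ (S_convexI cF SU) sS' covp FUs) => [FU0|[V [pV FV]]].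
  exists V'; split => // x Fx; case: (setU_eqT_cases x UV') => // Ux.
  by have : (F `&` U) x by []; rewrite FU0.
apply: (S_convex_separated2 cF pV' pV) => x Fx.
by case: (setU_eqT_cases x UV') => [Ux|]; [right; apply: FV|left].
Qed.

Lemma closed_S_convex_separation F p : closed F -> S_convex S F ->
  F !=set0 -> ~ F p -> exists V, S V /\ F `<=` V /\ ~ V p.
Proof.
move=> cF vF [q Fq] nFp.
have [s [sS [Fs nsp]]] := subbase_cover_avoiding cF nFp.
have covp : subbase_covers p.
  by apply: (@subbase_covers_distinct p q) => pq; apply: nFp; rewrite pq.
have sSp A : A \in s -> S A /\ ~ A p.
  by move=> As; split; [exact: sS | move=> Ap; apply: nsp;
    apply/bigsetU_seqP; exists A].
case: (S_convex_separated vF sSp covp Fs) =>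
  [F0|[V [[SV [T [ST [Tp TV]]]] FV]]].
  by move: Fq; rewrite F0.
by exists V; do 2!split => //; apply: setI_eq0_contra TV Tp.
Qed.

Definition gate_family (x0 : X) (F : set X) :=
  [set A | S A /\ A x0 /\ F `&` A !=set0].
Definition gate (x0 : X) (F : set X) := F `&` \bigcap_(A in gate_family x0 F) A.

Lemma gate_nonempty x0 F : closed F -> S_convex S F -> F !=set0 ->
  gate x0 F !=set0.
Proof.
move=> cF vF [w Fw].
pose L := [set A | gate_family x0 F A \/ (S A /\ F `<=` A)].
have LS : L `<=` S by move=> A [[]|[]].
have linL : linked_family L.
  move=> A B [[_ [Ax0 [u [Fu Au]]]]|[_ FA]] [[_ [Bx0 [v [Fv Bv]]]]|[_ FB]].
  - by exists x0.
  - by exists u; split => //; apply: FB.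
  - by exists v; split => //; apply: FA.
  - by exists w; split; [apply: FA|apply: FB].
have [p Lp] := S_binary LS linL.
have Fp : F p.
  apply: contrapT => nFp.
  have [V [SV [FV nVp]]] :=
    closed_S_convex_separation cF vF (ex_intro _ w Fw) nFp.
  by apply: nVp; apply: Lp; right.
by exists p; split => // A LA; apply: Lp; left.
Qed.

(* Separate two gates p, p' by A and a disjoint T, and split X = T0 \cup T1
   by normality; whichever of T0, T1 contains x0 belongs to the gate family
   and yet misses one of p, p'. *)
Lemma gate_unique x0 F p p' : gate x0 F p -> gate x0 F p' -> p = p'.
Proof.
move=> [Fp Gp] [Fp' Gp']; apply: contrapT => pp'.
have [A [SA [Ap nAp']]] := subbase_separates_points pp'.
have [T [ST [Tp' TA]]] :=
  subbase_disjoint_member SA nAp' (subbase_covers_distinct (nesym pp')).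
have AT : A `&` T = set0 by rewrite setIC.
have [T0 [T1 [ST0 [ST1 [AT1 [T0T T01]]]]]] := S_normal SA ST AT.
case: (setU_eqT_cases x0 T01) => [T0x0|T1x0].
  have T0p : T0 p by case: (setU_eqT_cases p T01) => // /(setI_eq0_contra AT1 Ap).
  by apply: setI_eq0_contra T0T _ Tp'; apply: Gp'; do 2!split => //; exists p.
have T1p' : T1 p'.
  by case: (setU_eqT_cases p' T01) => // T0p'; case: (setI_eq0_contra T0T T0p' Tp').
by apply: setI_eq0_contra AT1 Ap _; apply: Gp; do 2!split => //; exists p'.
Qed.

(* A point z of F other than the gate is cut off by a pair T0, T1 from
   normality: T0 misses z, and T0 contains the gate of x0 in every F' that
   leaves T1. *)
Lemma gate_far x0 F z g : gate x0 F g -> F z -> z <> g ->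
  exists T0 T1, S T0 /\ S T1 /\ ~ T0 z /\ F `&` ~` T1 !=set0 /\
  (forall F' g', gate x0 F' g' -> F' `&` ~` T1 !=set0 -> T0 g').
Proof.
move=> [Fg Gg] Fz zg.
have [W [[SW [Wx0 [w [Fw Ww]]]] nWz]] : exists W, gate_family x0 F W /\ ~ W z.
  apply: contrapT => noW; apply: zg; apply: (@gate_unique x0 F) => //.
  split => // A LA; apply: contrapT => nAz; apply: noW; by exists A.
have [T [ST [Tz TW]]] := subbase_disjoint_member SW nWz (subbase_covers_distinct zg).
have WT : W `&` T = set0 by rewrite setIC.
have [T0 [T1 [ST0 [ST1 [WT1 [T0T T01]]]]]] := S_normal SW ST WT.
have T0x0 : T0 x0 by case: (setU_eqT_cases x0 T01) => // /(setI_eq0_contra WT1 Wx0).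
exists T0, T1; do 2!split => //.
split; first by move=> T0z; apply: setI_eq0_contra T0T T0z Tz.
split; first by exists w; split => //; apply: setI_eq0_contra WT1 Ww.
move=> F' g' [F'g' Gg'] [x [F'x nT1x]]; apply: Gg'; do 2!split => //.
by exists x; split => //; case: (setU_eqT_cases x T01).
Qed.

(* The members of S in an ultrafilter are linked; a common point p is a
   limit, since every finite union of members avoiding p has its complement
   in the ultrafilter. *)
Lemma binary_subbase_compact : compact [set: X].
Proof.
rewrite compact_ultra => F FU _.
pose L := [set A | S A /\ F A].
have LS : L `<=` S by move=> A [].
have linL : linked_family L.
  move=> A B [_ FA] [_ FB]; apply/set0P/eqP => AB0.
  by apply: (@filter_not_empty _ F); rewrite -AB0; apply: filterI.
have [p Lp] := S_binary LS linL.
exists p; split => //.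
have avoid_in s : (forall A, A \in s -> S A) -> ~ UU s p -> F (~` UU s).
  elim: s => [|A s IH] sS nsp; first by rewrite big_nil setC0; apply: filterT.
  rewrite big_cons setCU; apply: filterI.
    case: (in_ultra_setVsetC A FU) => // FA; exfalso; apply: nsp.
    by rewrite big_cons; left; apply: Lp; split => //; apply: sS; rewrite mem_head.
  apply: IH; first by move=> B Bs; apply: sS; rewrite inE Bs orbT.
  by move=> sp; apply: nsp; rewrite big_cons; right.
move=> O; rewrite /= nbhsE; case=> O' [oO' O'p] O'O.
have [s [sS [Cs nsp]]] :=
  subbase_cover_avoiding (open_closedC oO') (fun nO'p => nO'p O'p).
apply: filterS (avoid_in s sS nsp) => x nsx.
by apply: O'O; apply: contrapT => nO'x; apply: nsx; apply: Cs.
Qed.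

Section GateSection.
Variables (Y : topologicalType) (f : X -> Y) (x0 : X).
Hypotheses (X_hausdorff : hausdorff_space X) (Y_hausdorff : hausdorff_space Y)
  (f_cont : continuous f) (f_surj : forall y, exists x, f x = y)
  (f_convex : S_convex_map S f) (f_open : S_open_map S f).

Definition gate_section (y : Y) : X := xget x0 (gate x0 (f @^-1` [set y])).

Lemma gate_sectionP y : gate x0 (f @^-1` [set y]) (gate_section y).
Proof.
apply: xgetPex; apply: gate_nonempty; last 2 first.
- exact: f_convex.
- by have [x fx] := f_surj y; exists x.
apply: preimage_closed; first by move=> x _; apply: f_cont.
exact: (@accessible_closed_set1 _ (hausdorff_accessible Y_hausdorff) y).
Qed.

Lemma gate_sectionK : cancel gate_section f.
Proof. by move=> y; case: (gate_sectionP y). Qed.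

Lemma cluster_gate_section y z :
  cluster (gate_section @ nbhs y) z -> z = gate_section y.
Proof.
move=> cl; apply: contrapT => zs.
have [fzy|fzy] := pselect (f z = y); last first.
  apply: fzy; apply: esym; apply: Y_hausdorff => A B nA nB.
  have A' : (gate_section @ nbhs y) (f @^-1` A).
    by apply: filterS nA => y' Ay'; rewrite /= gate_sectionK.
  by have [x [Ax Bx]] := cl _ _ A' (f_cont nB); exists (f x).
have [T0 [T1 [ST0 [ST1 [nT0z [[w [Fw nT1w]] T0gate]]]]]] :=
  gate_far (gate_sectionP y) fzy zs.
have nbhs_img : nbhs y (f @` (~` T1)).
  by apply: open_nbhs_nbhs; split; [exact: f_open | exists w].
have T0_near : (gate_section @ nbhs y) T0.
  apply: filterS nbhs_img => y' [x nT1x fxy'].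
  by apply: T0gate (gate_sectionP y') _; exists x.
have nbhs_z : nbhs z (~` T0).
  by apply: open_nbhs_nbhs; split => //; exact/closed_openC/(S_subbase.1 _ ST0).
by have [x [T0x nT0x]] := cl _ _ T0_near nbhs_z.
Qed.

Lemma gate_section_continuous : continuous gate_section.
Proof.
move=> y; apply: (compact_cluster_set1 X_hausdorff binary_subbase_compact
  filterT _ filterT).
apply/seteqP; split; first by move=> z /cluster_gate_section.
move=> _ ->.
have [w [_ clw]] := binary_subbase_compact (F := gate_section @ nbhs y) _ filterT.
by rewrite -(cluster_gate_section clw).
Qed.

Lemma continuous_section_exists : exists s : Y -> X, continuous s /\ cancel s f.
Proof.
by exists gate_section; split; [exact: gate_section_continuous | exact: gate_sectionK].
Qed.

End GateSection.
End BinaryNormalSubbase.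

Theorem corollary1p3 (X : topologicalType) (S : set (set X)) :
  tychonoff_space X -> closed_subbase S -> binary_subbase S -> normal_family S ->
  forall (Y : topologicalType) (f : X -> Y),
    tychonoff_space Y -> continuous f -> (forall y : Y, exists x : X, f x = y) ->
    S_convex_map S f -> S_open_map S f ->
    invertible_map f.
Proof.
move=> tX subS binS normS Y f tY cf fsurj fconv fopen Z tZ g cg.
have [[x0 _]|noX] := pselect (exists x : X, True); last first.
  have nZ (z : Z) : False by have [x _] := fsurj (g z); apply: noX; exists x.
  by exists (fun z => False_rect _ (nZ z)); split; [move=> z|apply: funext => z];
    case: (nZ z).
have [s [scont sK]] := continuous_section_exists tX.1 subS binS normS x0
  (tychonoff_hausdorff tX) (tychonoff_hausdorff tY) cf fsurj fconv fopen.
exists (s \o g); split; last by apply: funext => z; rewrite /= sK.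
by move=> z; apply: continuous_comp; [exact: cg | exact: scont].
Qed.
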